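(* If $(\mathcal{C},P)$ is a heaco, then for every object $A$ the poset $P(A)^{op}$ is a Heyting algebra; in particular every $P(A)$ has finite joins.
   Context: A doctrine is a pair $(\mathcal{C},P)$, $\mathcal{C}$ a category with finite products, $P:\mathcal{C}^{op}\to\mathbf{Pos}$ a functor, $f^*=P(f)$; primary: each $P(A)$ has binary meets preserved by each $f^*$. Elementary: primary and for every $A$ there is $\delta_A\in P(A\times A)$ such that for every $X$ the assignment $\psi\mapsto\langle\pi_1,\pi_2\rangle^*\psi\wedge\langle\pi_2,\pi_3\rangle^*\delta_A$ is a left adjoint $P(X\times A)\to P(X\times A\times A)$ to $(id_X\times\Delta_A)^*$. Graph of $f:X\to A$: $\mathcal{G}(f)=(f\times id_A)^*\delta_A$. Stable initial object: initial $0$ with $X\times0\cong0$ for all $X$. AC: for every $A$ not stable initial and every $\Gamma$, $\pi_\Gamma^*$ ($\pi_\Gamma:\Gamma\times A\to\Gamma$) has a left adjoint $\Sigma_{\pi_\Gamma}$ and each $\psi\in P(\Gamma\times A)$ has a chosen $\epsilon_\psi:\Gamma\to A$ with $\Sigma_{\pi_\Gamma}\psi=\langle id_\Gamma,\epsilon_\psi\rangle^*\psi$ (also with factors swapped). Co-comprehension: each $P(A)$ has a bottom and each $\alpha$ has $\lceil\alpha\rceil:\{\alpha\}^o\to A$ with $\lceil\alpha\rceil^*\alpha=\bot$, universal among $f$ with $f^*\alpha=\bot$; full if $\lceil\beta\rceil$ factoring through $\lceil\alpha\rceil$ implies $\alpha\le\beta$. An eaco is an elementary doctrine with full co-comprehension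 satisfying AC such that for every $f:X\to A$, $\alpha\in P(A)$: $f^*\langle\epsilon_{\mathcal{G}(\lceil\alpha\rceil)},id_A\rangle^*\mathcal{G}(\lceil\alpha\rceil)=\langle\epsilon_{\mathcal{G}(\lceil f^*\alpha\rceil)},id_X\rangle^*\mathcal{G}(\lceil f^*\alpha\rceil)$. Higher order: for every $A$ there are $\mathbb{P}(A)$ and $\in_A\in P(A\times\mathbb{P}(A))$ such that every $\phi\in P(A\times Y)$ equals $(id_A\times\chi_\phi)^*\in_A$ for some $\chi_\phi:Y\to\mathbb{P}(A)$. A heaco is a higher order eaco. *)

Set Implicit Arguments.
Unset Strict Implicit.

Record FPCat := {
  Ob :> Type;
  Hom : Ob -> Ob -> Type;
  idm : forall A, Hom A A;
  comp : forall A B C, Hom B C -> Hom A B -> Hom A C;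
  comp_id_l : forall A B (f : Hom A B), comp (idm B) f = f;
  comp_id_r : forall A B (f : Hom A B), comp f (idm A) = f;
  comp_assoc : forall A B C D (h : Hom C D) (g : Hom B C) (f : Hom A B),
      comp h (comp g f) = comp (comp h g) f;
  term : Ob;
  to_term : forall A, Hom A term;
  to_term_uniq : forall A (f : Hom A term), f = to_term A;
  prod : Ob -> Ob -> Ob;
  p1 : forall A B, Hom (prod A B) A;
  p2 : forall A B, Hom (prod A B) B;
  pair : forall X A B, Hom X A -> Hom X B -> Hom X (prod A B);
  pair_p1 : forall X A B (f : Hom X A) (g : Hom X B), comp (p1 A B) (pair f g) = f;
  pair_p2 : forall X A B (f : Hom X A) (g : Hom X B), comp (p2 A B) (pair f g) = g;
  pair_uniq : forall X A B (h : Hom X (prod A B)),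
      h = pair (comp (p1 A B) h) (comp (p2 A B) h)
}.

Arguments Hom {_} _ _.
Arguments idm {_} _.
Arguments comp {_ A B C} _ _.
Arguments term {_}.
Arguments to_term {_} _.
Arguments prod {_} _ _.
Arguments p1 {_} _ _.
Arguments p2 {_} _ _.
Arguments pair {_ X A B} _ _.

Definition prodm (C : FPCat) (X Y A B : C) (f : Hom X A) (g : Hom Y B)
  : Hom (prod X Y) (prod A B) :=
  pair (comp f (p1 X Y)) (comp g (p2 X Y)).

Definition is_iso (C : FPCat) (A B : C) : Prop :=
  exists (f : Hom A B) (g : Hom B A), comp g f = idm A /\ comp f g = idm B.

Definition stable_initial (C : FPCat) (Z : C) : Prop :=
  (forall B : C, exists f : Hom Z B, forall g : Hom Z B, g = f) /\
  (forall X : C, is_iso (prod X Z) Z).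

Record Doctrine (C : FPCat) := {
  PA : C -> Type;
  le : forall A, PA A -> PA A -> Prop;
  le_refl : forall A (x : PA A), le x x;
  le_trans : forall A (x y z : PA A), le x y -> le y z -> le x z;
  le_antisym : forall A (x y : PA A), le x y -> le y x -> x = y;
  pb : forall A B, Hom A B -> PA B -> PA A;
  pb_mono : forall A B (f : Hom A B) (x y : PA B), le x y -> le (pb f x) (pb f y);
  pb_id : forall A (x : PA A), pb (idm A) x = x;
  pb_comp : forall A B D (f : Hom A B) (g : Hom B D) (x : PA D),
      pb (comp g f) x = pb f (pb g x)
}.

Arguments PA {C} _ _.
Arguments le {C _ A} _ _.
Arguments pb {C _ A B} _ _.

Record Primary (C : FPCat) (P : Doctrine C) := {
  meet : forall A, PA P A -> PA P A -> PA P A;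
  meet_l : forall A (x y : PA P A), le (meet x y) x;
  meet_r : forall A (x y : PA P A), le (meet x y) y;
  meet_glb : forall A (x y z : PA P A), le z x -> le z y -> le z (meet x y);
  pb_meet : forall A B (f : Hom A B) (x y : PA P B),
      pb f (meet x y) = meet (pb f x) (pb f y)
}.
Arguments meet {C P} _ {A} _ _.

Definition pr12 (C : FPCat) (X A : C) : Hom (prod (prod X A) A) (prod X A) :=
  p1 (prod X A) A.
Definition pr23 (C : FPCat) (X A : C) : Hom (prod (prod X A) A) (prod A A) :=
  pair (comp (p2 X A) (p1 (prod X A) A)) (p2 (prod X A) A).
Definition idxDelta (C : FPCat) (X A : C) : Hom (prod X A) (prod (prod X A) A) :=
  pair (idm (prod X A)) (p2 X A).

Record Elementary (C : FPCat) (P : Doctrine C) := {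
  el_prim : Primary P;
  delta : forall A : C, PA P (prod A A);
  delta_adj : forall (X A : C) (psi : PA P (prod X A)) (phi : PA P (prod (prod X A) A)),
      le (meet el_prim (pb (pr12 X A) psi) (pb (pr23 X A) (delta A))) phi
      <-> le psi (pb (idxDelta X A) phi)
}.

Definition graph (C : FPCat) (P : Doctrine C) (E : Elementary P) (X A : C)
  (f : Hom X A) : PA P (prod X A) :=
  pb (prodm f (idm A)) (delta E A).

Record FullCoComprehension (C : FPCat) (P : Doctrine C) := {
  bot : forall A, PA P A;
  bot_least : forall A (x : PA P A), le (bot A) x;
  co : forall A, PA P A -> C;
  ceil : forall A (alpha : PA P A), Hom (co alpha) A;
  ceil_bot : forall A (alpha : PA P A), pb (ceil alpha) alpha = bot (co alpha);
  ceil_univ : forall A (alpha : PA P A) (Y : C) (f : Hom Y A),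
      pb f alpha = bot Y ->
      exists h : Hom Y (co alpha), comp (ceil alpha) h = f /\
        forall h' : Hom Y (co alpha), comp (ceil alpha) h' = f -> h' = h;
  ceil_full : forall A (alpha beta : PA P A) (h : Hom (co beta) (co alpha)),
      comp (ceil alpha) h = ceil beta -> le alpha beta
}.
Arguments co {C P} _ {A} _.
Arguments ceil {C P} _ {A} _.

Record AC (C : FPCat) (P : Doctrine C) := {
  sigR : forall (G A : C), ~ stable_initial A -> PA P (prod G A) -> PA P G;
  sigR_adj : forall G A (h : ~ stable_initial A) (psi : PA P (prod G A)) (phi : PA P G),
      le (sigR h psi) phi <-> le psi (pb (p1 G A) phi);
  epsR : forall (G A : C), ~ stable_initial A -> PA P (prod G A) -> Hom G A;
  sigR_eps : forall G A (h : ~ stable_initial A) (psi : PA P (prod G A)),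
      sigR h psi = pb (pair (idm G) (epsR h psi)) psi;
  sigL : forall (G A : C), ~ stable_initial A -> PA P (prod A G) -> PA P G;
  sigL_adj : forall G A (h : ~ stable_initial A) (psi : PA P (prod A G)) (phi : PA P G),
      le (sigL h psi) phi <-> le psi (pb (p2 A G) phi);
  epsL : forall (G A : C), ~ stable_initial A -> PA P (prod A G) -> Hom G A;
  sigL_eps : forall G A (h : ~ stable_initial A) (psi : PA P (prod A G)),
      sigL h psi = pb (pair (epsL h psi) (idm G)) psi
}.
Arguments epsL {C P} _ {G A} _ _.

Record Eaco (C : FPCat) (P : Doctrine C) := {
  ea_el : Elementary P;
  ea_co : FullCoComprehension P;
  ea_ac : AC P;
  ea_cond : forall (X A : C) (f : Hom X A) (alpha : PA P A)
      (h1 : ~ stable_initial (co ea_co alpha))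
      (h2 : ~ stable_initial (co ea_co (pb f alpha))),
      pb f (pb (pair (epsL ea_ac h1 (graph ea_el (ceil ea_co alpha))) (idm A))
                 (graph ea_el (ceil ea_co alpha)))
      = pb (pair (epsL ea_ac h2 (graph ea_el (ceil ea_co (pb f alpha)))) (idm X))
                 (graph ea_el (ceil ea_co (pb f alpha)))
}.

Record HigherOrder (C : FPCat) (P : Doctrine C) := {
  pow : C -> C;
  memb : forall A : C, PA P (prod A (pow A));
  pow_weak_univ : forall (A Y : C) (phi : PA P (prod A Y)),
      exists chi : Hom Y (pow A), phi = pb (prodm (idm A) chi) (memb A)
}.

Record Heaco (C : FPCat) (P : Doctrine C) := {
  he_eaco : Eaco P;
  he_ho : HigherOrder P
}.

Definition is_heyting_algebra (T : Type) (R : T -> T -> Prop) : Prop :=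
  exists (top bt : T) (mt jn imp : T -> T -> T),
    (forall x, R x top) /\ (forall x, R bt x) /\
    (forall x y z, R z (mt x y) <-> (R z x /\ R z y)) /\
    (forall x y z, R (jn x y) z <-> (R x z /\ R y z)) /\
    (forall x y z, R (mt z x) y <-> R z (imp x y)).

Definition has_finite_joins (T : Type) (R : T -> T -> Prop) : Prop :=
  (exists bt : T, forall x, R bt x) /\
  (forall x y : T, exists j : T, forall z, R j z <-> (R x z /\ R y z)).

(* In an eaco every y : P(A) has a complement, namely the image of its
   co-comprehension, ¬y := ∃o. ⌈y⌉ o = a.  Full co-comprehension says that
   x ≤ y iff ⌈y⌉^* x = ⊥, and the eaco condition (images are stable under
   reindexing) gives ⌈y⌉^* ¬y = ⊤, whence x ∧ ¬y = ⊥ implies x ≤ y.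
   Conversely y ∧ ¬y lies below ε^* ⊥ for the choice map ε of the image, and
   applied to ε and ⊥ the eaco condition forces ε^* ⊥ = ⊥, unless ε^* ⊥ is
   already ⊤, in which case ¬y = ⊥ by Leibniz's rule.  So
   x ∧ ¬y = ⊥ iff x ≤ y, which makes every P(A) a Boolean algebra, with joins
   x ∨ y = ¬(¬x ∧ ¬y); its opposite is then Heyting. *)
From Stdlib Require Import ClassicalEpsilon.
Set Implicit Arguments.
Unset Strict Implicit.

Section ComplementedPoset.

Variables (T : Type) (R : T -> T -> Prop).
Hypothesis R_refl : forall x, R x x.
Hypothesis R_trans : forall x y z, R x y -> R y z -> R x z.
Variables (m : T -> T -> T) (bt : T) (N : T -> T).
Hypothesis m_l : forall x y, R (m x y) x.
Hypothesis m_r : forall x y, R (m x y) y.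
Hypothesis m_glb : forall x y z, R z x -> R z y -> R z (m x y).
Hypothesis meet_N_le_bt : forall x y, R (m x (N y)) bt <-> R x y.

Lemma bt_least x : R bt x.
Proof. apply meet_N_le_bt, m_l. Qed.

Lemma meet_swap x y : R (m x y) (m y x).
Proof. apply m_glb; [apply m_r | apply m_l]. Qed.

Lemma meet_N_self y : R (m y (N y)) bt.
Proof. apply meet_N_le_bt, R_refl. Qed.

Lemma le_N_iff x y : R x (N y) <-> R (m x y) bt.
Proof.
  split; intro Hxy.
  - apply R_trans with (m y (N y)); [|apply meet_N_self].
    apply R_trans with (m y x); [apply meet_swap|].
    apply m_glb; [apply m_l | apply R_trans with x; [apply m_r | exact Hxy]].
  - apply meet_N_le_bt.
    assert (HNN : R (m x (N (N y))) y).
    { apply meet_N_le_bt. apply R_trans with (m (N y) (N (N y))); [|apply meet_N_self].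
      apply m_glb; [apply m_r | apply R_trans with (m x (N (N y))); apply m_l || apply m_r]. }
    apply R_trans with (m x y); [|exact Hxy].
    apply m_glb; [apply m_l | exact HNN].
Qed.

Lemma N_N_le y : R (N (N y)) y.
Proof. apply meet_N_le_bt. apply R_trans with (m (N y) (N (N y))); [apply meet_swap | apply meet_N_self]. Qed.

Lemma N_antitone x y : R x y -> R (N y) (N x).
Proof.
  intro Hxy. apply le_N_iff. apply R_trans with (m y (N y)); [|apply meet_N_self].
  apply m_glb; [apply R_trans with x; [apply m_r | exact Hxy] | apply m_l].
Qed.

Definition join x y := N (m (N x) (N y)).

Lemma join_le_iff x y z : R (join x y) z <-> R x z /\ R y z.
Proof.
  assert (Hl : R x (join x y)).
  { apply le_N_iff. apply R_trans with (m x (N x)); [|apply meet_N_self].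
    apply m_glb; [apply m_l | apply R_trans with (m (N x) (N y)); [apply m_r | apply m_l]]. }
  assert (Hr : R y (join x y)).
  { apply le_N_iff. apply R_trans with (m y (N y)); [|apply meet_N_self].
    apply m_glb; [apply m_l | apply R_trans with (m (N x) (N y)); apply m_r]. }
  split.
  - intro Hj. split; [apply R_trans with (join x y) ..]; assumption.
  - intros [Hx Hy]. apply R_trans with (N (N z)); [|apply N_N_le].
    apply N_antitone, m_glb; apply N_antitone; assumption.
Qed.

Lemma meet_assoc_le_bt y a b : R (m y (m a b)) bt <-> R (m (m y b) a) bt.
Proof.
  assert (Hab : R (m y (m a b)) (m (m y b) a)).
  { apply m_glb; [apply m_glb|].
    - apply m_l.
    - apply R_trans with (m a b); [apply m_r | apply m_r].
    - apply R_trans with (m a b); [apply m_r | apply m_l]. }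
  assert (Hba : R (m (m y b) a) (m y (m a b))).
  { apply m_glb; [|apply m_glb].
    - apply R_trans with (m y b); [apply m_l | apply m_l].
    - apply m_r.
    - apply R_trans with (m y b); [apply m_l | apply m_r]. }
  split; intro H; eapply R_trans; eassumption.
Qed.

Lemma complemented_has_finite_joins : has_finite_joins R.
Proof.
  split; [exists bt; exact bt_least|].
  intros x y. exists (join x y). apply join_le_iff.
Qed.

Lemma complemented_op_heyting : is_heyting_algebra (fun x y => R y x).
Proof.
  exists bt, (N bt), join, m, (fun x y => m y (N x)).
  split; [exact bt_least|].
  split; [intro x; apply le_N_iff, m_r|].
  split; [intros; apply join_le_iff|].
  split.
  - intros x y z. split; [intro H; split; apply R_trans with (m x y); auto|].
    intros [Hx Hy]. apply m_glb; assumption.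
  - intros x y z. unfold join. rewrite le_N_iff, <- (meet_N_le_bt (m y (N x)) z).
    apply meet_assoc_le_bt.
Qed.

End ComplementedPoset.

Section Products.

Variable C : FPCat.

Lemma comp_pair (X Y A B : C) (f : Hom Y A) (g : Hom Y B) (h : Hom X Y) :
  comp (pair f g) h = pair (comp f h) (comp g h).
Proof.
  rewrite (pair_uniq (comp (pair f g) h)).
  rewrite !comp_assoc, pair_p1, pair_p2. reflexivity.
Qed.

Lemma pair_p1_p2 (A B : C) : pair (p1 A B) (p2 A B) = idm (prod A B).
Proof. rewrite (pair_uniq (idm (prod A B))), !comp_id_r. reflexivity. Qed.

Lemma pr23_idxDelta (X A : C) :
  comp (pr23 X A) (idxDelta X A) = pair (p2 X A) (p2 X A).
Proof.
  unfold pr23, idxDelta. rewrite comp_pair.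
  rewrite <- comp_assoc, !pair_p1, !pair_p2, comp_id_r. reflexivity.
Qed.

Definition initial (W : C) : Prop :=
  forall B : C, exists f : Hom W B, forall g : Hom W B, g = f.

Lemma initial_of_hom_stable_initial (W Z : C) (h : Hom W Z) :
  stable_initial Z -> initial W.
Proof.
  intros [HZ Hstable] B. destruct (Hstable W) as [f [g [Hgf _]]].
  destruct (HZ B) as [k Hk].
  exists (comp (comp k f) (pair (idm W) h)). intro g1.
  assert (Hg1 : g1 = comp (comp g1 (p1 W Z)) (pair (idm W) h))
    by (rewrite <- comp_assoc, pair_p1, comp_id_r; reflexivity).
  rewrite Hg1. f_equal.
  rewrite <- (comp_id_r (comp g1 (p1 W Z))), <- Hgf, comp_assoc.
  rewrite (Hk (comp (comp g1 (p1 W Z)) g)). reflexivity.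
Qed.

End Products.

Definition is_top (C : FPCat) (P : Doctrine C) (A : C) (a : PA P A) : Prop :=
  forall x, le x a.

Section ElementaryDoctrine.

Variables (C : FPCat) (P : Doctrine C) (E : Elementary P).

Local Notation mt x y := (meet (el_prim E) x y).

Lemma delta_pair_top (Z A : C) (a : Hom Z A) : is_top (pb (pair a a) (delta E A)).
Proof.
  intro phi.
  set (psi := pb (p1 Z A) phi).
  assert (Hunit : le psi (pb (idxDelta Z A)
                    (mt (pb (pr12 Z A) psi) (pb (pr23 Z A) (delta E A)))))
    by (apply (delta_adj E), le_refl).
  assert (Hpsi : le psi (pb (pair (p2 Z A) (p2 Z A)) (delta E A))).
  { rewrite pb_meet in Hunit. eapply le_trans; [exact Hunit|].
    eapply le_trans; [apply meet_r|]. rewrite <- pb_comp, pr23_idxDelta. apply le_refl. }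
  apply (pb_mono (pair (idm Z) a)) in Hpsi.
  unfold psi in Hpsi. rewrite <- !pb_comp in Hpsi.
  rewrite pair_p1, pb_id, comp_pair, pair_p2 in Hpsi. exact Hpsi.
Qed.

Lemma pb_top (X A : C) (f : Hom X A) (a : PA P A) : is_top a -> is_top (pb f a).
Proof.
  intros Ha x. eapply le_trans; [apply (delta_pair_top f)|].
  replace (pair f f) with (comp (pair (idm A) (idm A)) f)
    by (rewrite comp_pair, !comp_id_l; reflexivity).
  rewrite pb_comp. apply pb_mono, Ha.
Qed.

Lemma delta_subst (Z X A : C) (phi : PA P (prod X A)) (x : Hom Z X) (a1 a2 : Hom Z A) :
  le (mt (pb (pair x a1) phi) (pb (pair a1 a2) (delta E A))) (pb (pair x a2) phi).
Proof.
  set (Phi := pb (pair (comp (p1 X A) (p1 (prod X A) A)) (p2 (prod X A) A)) phi).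
  assert (HPhi : le (mt (pb (pr12 X A) phi) (pb (pr23 X A) (delta E A))) Phi).
  { apply (delta_adj E). unfold Phi, idxDelta. rewrite <- pb_comp, comp_pair.
    rewrite <- comp_assoc, !pair_p1, pair_p2, comp_id_r, pair_p1_p2, pb_id.
    apply le_refl. }
  apply (pb_mono (pair (pair x a1) a2)) in HPhi.
  rewrite pb_meet in HPhi. unfold Phi, pr12, pr23 in HPhi. rewrite <- !pb_comp in HPhi.
  rewrite !comp_pair, <- !comp_assoc, !pair_p1, !pair_p2 in HPhi. exact HPhi.
Qed.

Lemma delta_subst1 (Z A : C) (phi : PA P A) (a1 a2 : Hom Z A) :
  le (mt (pb a1 phi) (pb (pair a1 a2) (delta E A))) (pb a2 phi).
Proof.
  pose proof (delta_subst (pb (p2 term A) phi) (to_term Z) a1 a2) as H.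
  rewrite <- !pb_comp, !pair_p2 in H. exact H.
Qed.

Lemma delta_sym (Z A : C) (a1 a2 : Hom Z A) :
  le (pb (pair a1 a2) (delta E A)) (pb (pair a2 a1) (delta E A)).
Proof.
  pose proof (delta_subst (pb (pair (p2 A A) (p1 A A)) (delta E A)) a1 a1 a2) as H.
  rewrite <- !pb_comp, !comp_pair, !pair_p1, !pair_p2 in H.
  eapply le_trans; [|exact H]. apply meet_glb; [apply delta_pair_top | apply le_refl].
Qed.

Lemma pb_eq_id_of_delta_top (A : C) (e : Hom A A) :
  is_top (pb (pair e (idm A)) (delta E A)) -> forall phi : PA P A, pb e phi = phi.
Proof.
  intros He phi. apply le_antisym.
  - pose proof (delta_subst1 phi e (idm A)) as H. rewrite pb_id in H.
    eapply le_trans; [|exact H]. apply meet_glb; [apply le_refl | apply He].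
  - pose proof (delta_subst1 phi (idm A) e) as H. rewrite pb_id in H.
    eapply le_trans; [|exact H]. apply meet_glb; [apply le_refl|].
    eapply le_trans; [apply He | apply delta_sym].
Qed.

Lemma pb_pair_graph (Z O A : C) (c : Hom O A) (f : Hom Z O) (g : Hom Z A) :
  pb (pair f g) (graph E c) = pb (pair (comp c f) g) (delta E A).
Proof.
  unfold graph, prodm.
  rewrite <- pb_comp, comp_pair, <- !comp_assoc, pair_p1, pair_p2, comp_id_l.
  reflexivity.
Qed.

End ElementaryDoctrine.

Section CoComprehension.

Variables (C : FPCat) (P : Doctrine C) (Co : FullCoComprehension P).

Lemma pb_ceil_le_bot_iff (A : C) (x y : PA P A) :
  le (pb (ceil Co y) x) (bot Co _) <-> le x y.
Proof.
  split; intro H.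
  - assert (Hbot : pb (ceil Co y) x = bot Co _)
      by (apply le_antisym; [exact H | apply bot_least]).
    destruct (ceil_univ Hbot) as [h [Hh _]].
    exact (ceil_full Hh).
  - rewrite <- (ceil_bot Co y). apply pb_mono, H.
Qed.

Lemma top_of_initial_co (A : C) (b : PA P A) : initial (co Co b) -> is_top b.
Proof.
  intros Hb x. destruct (Hb (co Co x)) as [h _].
  apply (@ceil_full _ _ Co _ x b h).
  destruct (Hb A) as [f Hf].
  rewrite (Hf (comp (ceil Co x) h)), (Hf (ceil Co b)). reflexivity.
Qed.

Lemma top_of_stable_initial_co (A : C) (b : PA P A) :
  stable_initial (co Co b) -> is_top b.
Proof. intro Hb. exact (top_of_initial_co (initial_of_hom_stable_initial (idm _) Hb)). Qed.

Lemma le_of_hom_stable_initial (W Z : C) (h : Hom W Z) :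
  stable_initial Z -> forall x y : PA P W, le x y.
Proof.
  intros HZ x y.
  exact (top_of_initial_co (initial_of_hom_stable_initial (comp h (ceil Co y)) HZ) x).
Qed.

End CoComprehension.

Section ExistentialOfGraph.

Variables (C : FPCat) (P : Doctrine C) (E : Elementary P) (Ac : AC P).

Lemma sigL_graph_eq (O A : C) (c : Hom O A) (h : ~ stable_initial O) :
  sigL Ac h (graph E c)
  = pb (pair (comp c (epsL Ac h (graph E c))) (idm A)) (delta E A).
Proof. rewrite sigL_eps. apply pb_pair_graph. Qed.

Lemma sigL_graph_top_of_section (O A : C) (c : Hom O A) (h : ~ stable_initial O)
  (s : Hom A O) : comp c s = idm A -> is_top (sigL Ac h (graph E c)).
Proof.
  intro Hs.
  assert (Hunit : is_top (pb c (sigL Ac h (graph E c)))).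
  { intro chi. pose proof (proj1 (sigL_adj Ac h (graph E c) _) (le_refl _)) as H.
    apply (pb_mono (pair (idm O) c)) in H.
    rewrite <- pb_comp, pair_p2, pb_pair_graph, comp_id_r in H.
    eapply le_trans; [apply (delta_pair_top E)|exact H]. }
  intro x. rewrite <- (pb_id (sigL Ac h (graph E c))), <- Hs, pb_comp.
  apply (pb_top E s Hunit).
Qed.

End ExistentialOfGraph.

Section Complement.

Variables (C : FPCat) (P : Doctrine C) (Ea : Eaco P).

Local Notation E := (ea_el Ea).
Local Notation Co := (ea_co Ea).
Local Notation Ac := (ea_ac Ea).
Local Notation mt x y := (meet (el_prim E) x y).

(* The image of [ceil y]; AC provides no existential over a stable initial
   [co y], and there the junk value is [bot], which is then also the top. *)
Definition neg (A : C) (y : PA P A) : PA P A :=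
  match excluded_middle_informative (stable_initial (co Co y)) with
  | left _ => bot Co A
  | right h => sigL Ac h (graph E (ceil Co y))
  end.

Lemma pb_neg (X A : C) (f : Hom X A) (alpha : PA P A) :
  ~ stable_initial (co Co alpha) -> ~ stable_initial (co Co (pb f alpha)) ->
  pb f (neg alpha) = neg (pb f alpha).
Proof.
  intros Ha Hfa. unfold neg.
  destruct (excluded_middle_informative (stable_initial (co Co alpha))) as [|h1];
    [contradiction|].
  destruct (excluded_middle_informative (stable_initial (co Co (pb f alpha)))) as [|h2];
    [contradiction|].
  rewrite !sigL_eps. apply ea_cond.
Qed.

Lemma neg_top_of_pb_bot (X A : C) (f : Hom X A) (alpha : PA P A) :
  pb f alpha = bot Co X -> is_top (pb f (neg alpha)).
Proof.
  intro Hf.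
  destruct (excluded_middle_informative (stable_initial (co Co alpha))) as [Ha|Ha].
  { intro x. eapply le_trans; [apply (pb_top E f (top_of_stable_initial_co Ha))|].
    rewrite Hf. apply bot_least. }
  assert (Hid : pb (idm X) (pb f alpha) = bot Co X) by (rewrite pb_id; exact Hf).
  destruct (ceil_univ Hid) as [s [Hs _]].
  destruct (excluded_middle_informative (stable_initial (co Co (pb f alpha)))) as [Hfa|Hfa].
  { intro x. exact (le_of_hom_stable_initial Co s Hfa _ _). }
  rewrite (pb_neg Ha Hfa). unfold neg.
  destruct (excluded_middle_informative (stable_initial (co Co (pb f alpha)))) as [|h];
    [contradiction|].
  exact (sigL_graph_top_of_section E Ac h Hs).
Qed.

Lemma le_bot_of_neg_top (A : C) (b : PA P A) : is_top (neg b) -> le b (bot Co A).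
Proof.
  unfold neg.
  destruct (excluded_middle_informative (stable_initial (co Co b))) as [_|h];
    [intro Hb; apply Hb|].
  rewrite sigL_graph_eq. intro Htop.
  pose proof (pb_eq_id_of_delta_top Htop) as He.
  rewrite <- (He b) at 1. rewrite <- (He (bot Co A)).
  rewrite !pb_comp, ceil_bot. apply pb_mono, bot_least.
Qed.

Lemma pb_bot_le_bot_or_top (X O : C) (f : Hom X O) :
  le (pb f (bot Co O)) (bot Co X) \/ is_top (pb f (bot Co O)).
Proof.
  destruct (excluded_middle_informative (stable_initial (co Co (bot Co O)))) as [H0|H0].
  { left. destruct (ceil_univ (pb_id (bot Co O))) as [s0 [_ _]].
    exact (le_of_hom_stable_initial Co (comp s0 f) H0 _ _). }
  destruct (excluded_middle_informative (stable_initial (co Co (pb f (bot Co O))))) as [Hf|Hf].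
  { right. exact (top_of_stable_initial_co Hf). }
  left. apply le_bot_of_neg_top. rewrite <- (pb_neg H0 Hf). apply (pb_top E).
  rewrite <- (pb_id (neg (bot Co O))). apply neg_top_of_pb_bot, pb_id.
Qed.

Lemma le_of_meet_neg_le_bot (A : C) (x y : PA P A) :
  le (mt x (neg y)) (bot Co A) -> le x y.
Proof.
  intro H. apply (pb_ceil_le_bot_iff Co).
  eapply le_trans with (pb (ceil Co y) (mt x (neg y))).
  - rewrite pb_meet. apply meet_glb; [apply le_refl|].
    apply (neg_top_of_pb_bot (ceil_bot Co y)).
  - eapply le_trans; [apply pb_mono, H|]. apply (pb_ceil_le_bot_iff Co), bot_least.
Qed.

Lemma meet_neg_le_bot (A : C) (y : PA P A) : le (mt y (neg y)) (bot Co A).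
Proof.
  unfold neg.
  destruct (excluded_middle_informative (stable_initial (co Co y))) as [_|h];
    [apply meet_r|].
  rewrite sigL_graph_eq.
  set (c := ceil Co y). set (eps := epsL Ac h (graph E c)).
  assert (Hy : le (mt y (pb (pair (comp c eps) (idm A)) (delta E A)))
                  (pb eps (bot Co (co Co y)))).
  { rewrite <- (ceil_bot Co y), <- pb_comp.
    eapply le_trans; [|apply (delta_subst1 E y (idm A) (comp c eps))]. rewrite pb_id.
    apply meet_glb; [apply meet_l|]. eapply le_trans; [apply meet_r | apply delta_sym]. }
  destruct (pb_bot_le_bot_or_top eps) as [Hb|Htop].
  - exact (le_trans Hy Hb).
  - eapply le_trans; [apply meet_r|].
    pose proof (delta_subst1 E (bot Co A) (comp c eps) (idm A)) as Hsubst.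
    rewrite pb_id in Hsubst. eapply le_trans; [|exact Hsubst].
    apply meet_glb; [|apply le_refl].
    eapply le_trans; [apply Htop|]. rewrite pb_comp. apply pb_mono, bot_least.
Qed.

Lemma meet_neg_le_bot_iff (A : C) (x y : PA P A) :
  le (mt x (neg y)) (bot Co A) <-> le x y.
Proof.
  split; [apply le_of_meet_neg_le_bot|].
  intro Hxy. eapply le_trans; [|apply (meet_neg_le_bot y)].
  apply meet_glb; [eapply le_trans; [apply meet_l | exact Hxy] | apply meet_r].
Qed.

End Complement.

Theorem mainTheorem15 (C : FPCat) (P : Doctrine C) (H : Heaco P) :
  forall A : C,
    is_heyting_algebra (fun x y : PA P A => le y x) /\
    has_finite_joins (fun x y : PA P A => le x y).
Proof.
  intro A.
  set (Ea := he_eaco H).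
  pose proof (@meet_neg_le_bot_iff _ _ Ea A) as Hcompl.
  split.
  - exact (complemented_op_heyting (@le_refl _ P A) (@le_trans _ P A)
             (@meet_l _ _ _ A) (@meet_r _ _ _ A) (@meet_glb _ _ _ A) Hcompl).
  - exact (complemented_has_finite_joins (@le_refl _ P A) (@le_trans _ P A)
             (@meet_l _ _ _ A) (@meet_r _ _ _ A) (@meet_glb _ _ _ A) Hcompl).
Qed.
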